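(* Let $P$ be a finite poset, $r,s$ positive integers, and $\theta$ a cyclic permutation of $\mathbf{F}_0\cup\mathbf{F}_1$. For every $p\in P$, the statistic $T_p^+-\frac{r}{s}T_p^-$, viewed as a statistic on $\mathcal{J}_{r,s}(P)$, is $0$-mesic under the $q$-rowmotion operator $\rho\colon\mathcal{J}_{r,s}(P)\to\mathcal{J}_{r,s}(P)$.
   Context: $\mathbf{F}_0$ and $\mathbf{F}_1$ are disjoint sets with $\#\mathbf{F}_0=s$, $\#\mathbf{F}_1=r$, and $\theta$ is a permutation of $\mathbf{F}_0\cup\mathbf{F}_1$ consisting of a single cycle of length $r+s$. $\mathcal{J}_{r,s}(P)$ is the set of labelings $L\colon P\to\mathbf{F}_0\cup\mathbf{F}_1$ such that $L^{-1}(\mathbf{F}_0)$ is an order ideal of $P$. An element $x$ is active in $L$ if $x$ is maximal in $L^{-1}(\mathbf{F}_0)$ or minimal in $L^{-1}(\mathbf{F}_1)$. The toggle $\tau_p$ on $\mathcal{J}_{r,s}(P)$ replaces the label $L(p)$ by $\theta(L(p))$ if $p$ is active in $L$, and does nothing otherwise; all other labels are unchanged. $q$-rowmotion is $\rho=\tau_{p_1}\circ\cdots\circ\tau_{p_n}$ for any linear extension $p_1,\dots,p_n$ of $P$. For an order ideal $I$ of $P$: $T_p^+(I)=1$ if $p$ is minimal in $P\setminus I$, else $0$; $T_p^-(I)=1$ if $p$ is maximal in $I$, else $0$; a statistic $g$ on order ideals is viewed on $\mathcal{J}_{r,s}(P)$ via $g(L)\coloneqq g(L^{-1}(\mathbf{F}_0))$.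 A statistic is $c$-mesic under an invertible map of a finite set if its average over every orbit equals $c$. *)

From mathcomp Require Import all_boot all_order all_algebra all_fingroup.
Set Implicit Arguments. Unset Strict Implicit. Unset Printing Implicit Defensive.
Import Order.TTheory GRing.Theory.
Local Open Scope order_scope.

Section QRowmotion.
Variables (d : Order.disp_t) (P : finPOrderType d) (Lab : finType).

Definition preim_set (F : {set Lab}) (L : {ffun P -> Lab}) : {set P} :=
  [set x | L x \in F].

Definition is_order_ideal (I : {set P}) : bool :=
  [forall x, forall y, ((x \in I) && (y <= x)) ==> (y \in I)].

Definition Jrs (F0 : {set Lab}) : {set {ffun P -> Lab}} :=
  [set L | is_order_ideal (preim_set F0 L)].

Definition maximal_in (S : {set P}) (x : P) : bool :=
  (x \in S) && [forall y, (y \in S) ==> ~~ (x < y)].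
Definition minimal_in (S : {set P}) (x : P) : bool :=
  (x \in S) && [forall y, (y \in S) ==> ~~ (y < x)].

Definition active (F0 F1 : {set Lab}) (L : {ffun P -> Lab}) (x : P) : bool :=
  maximal_in (preim_set F0 L) x || minimal_in (preim_set F1 L) x.

Definition toggle (F0 F1 : {set Lab}) (theta : {perm Lab}) (p : P)
    (L : {ffun P -> Lab}) : {ffun P -> Lab} :=
  if active F0 F1 L p then [ffun x => if x == p then theta (L x) else L x]
  else L.

Definition linear_extension (s : seq P) : Prop :=
  [/\ uniq s, forall x, x \in s &
      forall x y, x < y -> (index x s < index y s)%N].

Definition rowmotion (F0 F1 : {set Lab}) (theta : {perm Lab}) (s : seq P)
    (L : {ffun P -> Lab}) : {ffun P -> Lab} :=
  foldr (fun p M => toggle F0 F1 theta p M) L s.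

Definition Tplus (I : {set P}) (p : P) : rat :=
  (((p \notin I) && [forall q, (q < p) ==> (q \in I)]) : nat)%:R.
Definition Tminus (I : {set P}) (p : P) : rat :=
  (((p \in I) && [forall q, (p < q) ==> (q \notin I)]) : nat)%:R.

End QRowmotion.

Definition single_cycle (Lab : finType) (theta : {perm Lab}) : Prop :=
  forall x, #|porbit theta x| = #|Lab|.

Arguments preim_set {d P Lab} F L.
Arguments is_order_ideal {d P} I.
Arguments Jrs {d P Lab} F0.
Arguments maximal_in {d P} S x.
Arguments minimal_in {d P} S x.
Arguments active {d P Lab} F0 F1 L x.
Arguments toggle {d P Lab} F0 F1 theta p L.
Arguments linear_extension {d P} s.
Arguments rowmotion {d P Lab} F0 F1 theta s L.
Arguments Tplus {d P} I p.
Arguments Tminus {d P} I p.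

(* Put h l := [l \in F1] - (r/s) [theta l \in F0].  The sum of h over all
   labels is r - (r/s) s = 0 and theta is a single cycle, so h = g \o theta - g
   for some g.  Under q-rowmotion the label of p either stays put or moves one
   step along theta, and it moves exactly when p is active at the moment it is
   toggled; T^+_p(L) = 1 iff it moves away from a label in F1, and
   T^-_p(rho L) = 1 iff it moves to a label in F0.  Hence
   T^+_p(L) - (r/s) T^-_p(rho L) = g ((rho L) p) - g (L p), and summed over a
   rho-orbit both this difference and the shift of T^-_p telescope to 0. *)

From mathcomp Require Import all_boot all_order all_algebra all_fingroup.
Import Order.TTheory GRing.Theory Num.Theory.

Set Implicit Arguments.
Unset Strict Implicit.
Unset Printing Implicit Defensive.

Local Open Scope ring_scope.
Local Open Scope order_scope.

Lemma big_traject (T : Type) (V : nmodType) (f : T -> T) x n (F : T -> V) :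
  \sum_(y <- traject f x n) F y = \sum_(0 <= i < n) F (iter i f x).
Proof.
rewrite (big_nth x) size_traject; apply: eq_big_nat => i /andP[_ lt_in].
by rewrite nth_traject.
Qed.

Lemma orbit_sum_telescope (T : finType) (V : zmodType) (f : T -> T) x
    (u : T -> V) :
  iter (fingraph.order f x) f x = x ->
  \sum_(y <- fingraph.orbit f x) (u (f y) - u y) = 0.
Proof.
move=> f_cycle; rewrite big_traject.
by rewrite (telescope_sumr (fun i => u (iter i f x))) // f_cycle subrr.
Qed.

Lemma cyclic_coboundary (T : finType) (V : zmodType) (f : T -> T) (x0 : T)
    (h : T -> V) :
  injective f -> (forall y, fconnect f x0 y) -> \sum_y h y = 0 ->
  exists g : T -> V, forall y, g (f y) - g y = h y.
Proof.
move=> f_inj x0_conn sum_h0.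
pose u i := \sum_(0 <= j < i) h (iter j f x0).
have u_order : u (fingraph.order f x0) = 0.
  rewrite /u -big_traject -[RHS]sum_h0; apply: perm_big; apply: uniq_perm.
  - exact: orbit_uniq.
  - exact: index_enum_uniq.
  - by move=> y; rewrite mem_index_enum -fconnect_orbit x0_conn.
have u_findex k :
    (k <= fingraph.order f x0)%N -> u (findex f x0 (iter k f x0)) = u k.
  rewrite leq_eqVlt => /predU1P[->|lt_k]; last by rewrite findex_iter.
  by rewrite iter_order // findex0 u_order /u big_geq.
exists (fun y => u (findex f x0 y)) => y.
have [i lt_i ->] : exists2 i, (i < fingraph.order f x0)%N & y = iter i f x0.
  by exists (findex f x0 y); rewrite ?iter_findex ?findex_max.
rewrite -iterS !u_findex ?(ltnW lt_i) //.
by rewrite /u big_nat_recr //= addrAC subrr add0r.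
Qed.

Lemma single_cycle_fconnect (T : finType) (s : {perm T}) x y :
  single_cycle s -> fconnect s x y.
Proof.
move=> s_cycle; have : y \in porbit s x.
  suff -> : porbit s x = [set: T] by rewrite inE.
  by apply/eqP; rewrite eqEcard subsetT cardsT s_cycle leqnn.
by case/porbitP => i ->; rewrite permX fconnect_iter.
Qed.

Lemma sum_indicator (T : finType) (R : nzRingType) (A : {set T}) :
  \sum_x ((x \in A)%:R : R) = #|A|%:R.
Proof.
by rewrite -sumr_const [RHS]big_mkcond; apply: eq_bigr => x _; case: (x \in A).
Qed.

Lemma single_cycle_coboundary (T : finType) (R : nzRingType) (s : {perm T})
    (A B : {set T}) (c : R) :
  single_cycle s -> #|B|%:R = c * #|A|%:R ->
  exists g : T -> R, forall x, g (s x) - g x = (x \in B)%:R - c * (s x \in A)%:R.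
Proof.
move=> s_cycle card_BA; case: (pickP (@predT T)) => [x0 _ | T0]; last first.
  by exists (fun _ => 0) => x; have := T0 x.
apply: (cyclic_coboundary (x0 := x0) (@perm_inj _ s)) => [y|].
  exact: single_cycle_fconnect.
have sum_sA : \sum_x ((s x \in A)%:R : R) = #|A|%:R.
  by rewrite -sum_indicator [RHS](reindex_perm s).
by rewrite sumrB -mulr_sumr sum_indicator sum_sA card_BA subrr.
Qed.

Section LinearExtension.
Variables (d : Order.disp_t) (P : finPOrderType d).

Lemma linear_extension_split (ext : seq P) p : linear_extension ext ->
  exists s1 s2, [/\ ext = s1 ++ p :: s2, p \notin s1, p \notin s2,
    forall q, q < p -> q \notin s2 & forall q, p < q -> q \notin s1].
Proof.
case=> ext_uniq ext_all; move: ext_uniq; case/splitPr: (ext_all p) => s1 s2.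
rewrite cat_uniq /= negb_or => /and3P[_ /andP[p_s1 s1_s2] /andP[p_s2 _]] ext_mono.
have index_p : index p (s1 ++ p :: s2) = size s1.
  by rewrite index_cat (negbTE p_s1) /= eqxx addn0.
exists s1, s2; split => // q => [qp | pq].
  apply: contraL (ext_mono _ _ qp) => q_s2; rewrite index_p -leqNgt index_cat.
  have /negbTE -> : q \notin s1.
    by apply: contra s1_s2 => q_s1; apply/hasP; exists q.
  exact: leq_addr.
apply: contraL (ext_mono _ _ pq) => q_s1.
by rewrite index_p index_cat q_s1 -leqNgt ltnW // index_mem.
Qed.

End LinearExtension.

Section Toggles.
Variables (d : Order.disp_t) (P : finPOrderType d) (Lab : finType).
Variables (F0 F1 : {set Lab}) (theta : {perm Lab}).
Hypotheses (F01_disjoint : [disjoint F0 & F1])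
           (F01_cover : F0 :|: F1 = [set: Lab]).
Implicit Types (L : {ffun P -> Lab}) (p q x y : P).

Lemma mem_F1 l : (l \in F1) = (l \notin F0).
Proof.
apply/idP/idP => [l_F1|/negPf l_F0]; first by rewrite (disjointFl F01_disjoint).
by have := in_setT l; rewrite -F01_cover inE l_F0.
Qed.

Lemma JrsP L :
  reflect (forall a b, L a \in F0 -> b <= a -> L b \in F0) (L \in Jrs F0).
Proof.
rewrite inE; apply: (iffP forallP) => [ideal a b La ba | ideal a].
  by have /forallP/(_ b) := ideal a; rewrite !inE La ba.
by apply/forallP => b; apply/implyP; rewrite !inE => /andP[]; apply: ideal.
Qed.

Lemma activeE L x : L \in Jrs F0 ->
  active F0 F1 L x =
    [forall y, (y < x) ==> (L y \in F0)] &&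
    [forall y, (x < y) ==> (L y \notin F0)].
Proof.
move=> /JrsP ideal; rewrite /active /maximal_in /minimal_in !inE mem_F1.
apply/orP/andP; last first.
  case=> /forallP below /forallP above.
  case: (boolP (L x \in F0)) => _; [left | right]; apply/forallP => y.
    by rewrite inE; apply/implyP/contraL => xy; have := above y; rewrite xy.
  rewrite inE mem_F1; apply/implyP/contraL => yx.
  by have := below y; rewrite yx negbK.
case=> /andP[Lx /forallP act]; split; apply/forallP => y; apply/implyP.
- by move=> yx; apply: ideal Lx (ltW yx).
- by move=> xy; have := act y; rewrite inE xy implybF.
- by move=> yx; have := act y; rewrite inE mem_F1 yx implybF negbK.
- by move=> xy; apply: contra Lx => Ly; apply: ideal Ly (ltW xy).
Qed.

Lemma toggle_other p L x : x != p -> toggle F0 F1 theta p L x = L x.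
Proof.
by move=> /negPf xp; rewrite /toggle; case: ifP => // _; rewrite ffunE xp.
Qed.

Lemma toggle_at p L :
  toggle F0 F1 theta p L p = if active F0 F1 L p then theta (L p) else L p.
Proof. by rewrite /toggle; case: ifP => // _; rewrite ffunE eqxx. Qed.

Lemma rowmotion_notin s L x : x \notin s -> rowmotion F0 F1 theta s L x = L x.
Proof.
elim: s => //= q s IH; rewrite inE negb_or => /andP[xq xs].
by rewrite toggle_other ?IH.
Qed.

Lemma toggle_Jrs p L : L \in Jrs F0 -> toggle F0 F1 theta p L \in Jrs F0.
Proof.
move=> L_J; rewrite /toggle; case: ifP => //.
rewrite activeE // => /andP[/forallP below /forallP above].
apply/JrsP => a b; rewrite !ffunE.
case: (eqVneq a p) => [->|ap]; case: (eqVneq b p) => [->|bp] //.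
- by move=> _ bp'; have := below b; rewrite lt_neqAle bp bp'.
- by move=> La pa; have := above a; rewrite lt_neqAle eq_sym ap pa La.
- by move/JrsP: L_J; apply.
Qed.

Lemma active_toggle p L : L \in Jrs F0 ->
  active F0 F1 (toggle F0 F1 theta p L) p = active F0 F1 L p.
Proof.
move=> L_J; rewrite !activeE ?toggle_Jrs //.
congr (_ && _); apply: eq_forallb => y;
  by case: (eqVneq y p) => [->|yp]; [rewrite ltxx | rewrite toggle_other].
Qed.

Lemma toggle_inj p : {in Jrs (P := P) F0 &, injective (toggle F0 F1 theta p)}.
Proof.
move=> L1 L2 J1 J2 eq12.
have act12 : active F0 F1 L1 p = active F0 F1 L2 p.
  by rewrite -(active_toggle p J1) -(active_toggle p J2) eq12.
move: eq12; rewrite /toggle -act12; case: ifP => // _ /ffunP eq12.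
by apply/ffunP => x; have := eq12 x; rewrite !ffunE; case: eqP => // _ /perm_inj.
Qed.

Lemma rowmotion_Jrs s L : L \in Jrs F0 -> rowmotion F0 F1 theta s L \in Jrs F0.
Proof. by move=> L_J; elim: s => //= q s; apply: toggle_Jrs. Qed.

Lemma rowmotion_inj s :
  {in Jrs (P := P) F0 &, injective (rowmotion F0 F1 theta s)}.
Proof.
elim: s => // q s IH L1 L2 J1 J2 /= /toggle_inj eq12.
by apply: IH; rewrite // eq12 ?rowmotion_Jrs.
Qed.

Lemma rowmotion_above_notin s L p : L \in Jrs F0 -> p \notin s -> L p \notin F0 ->
  forall q, p < q -> rowmotion F0 F1 theta s L q \notin F0.
Proof.
move=> L_J p_s Lp q pq; have Lq : L q \notin F0.
  by apply: contra Lp => Lq; move/JrsP: L_J; apply; last exact: ltW pq.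
elim: s p_s => //= x s IH; rewrite inE negb_or => /andP[_ p_s].
have {}IH := IH p_s.
case: (eqVneq q x) => [<-|qx]; last by rewrite toggle_other.
rewrite toggle_at activeE ?rowmotion_Jrs //.
suff /negPf -> :
  ~~ [forall y, (y < q) ==> (rowmotion F0 F1 theta s L y \in F0)] by [].
by apply/forallPn; exists p; rewrite negb_imply pq rowmotion_notin.
Qed.

Lemma TplusE L p :
  Tplus (preim_set F0 L) p =
    ((L p \notin F0) && [forall q, (q < p) ==> (L q \in F0)])%:R.
Proof.
by rewrite /Tplus inE; congr (_ && _)%:R; apply: eq_forallb => q; rewrite inE.
Qed.

Lemma TminusE L p :
  Tminus (preim_set F0 L) p =
    ((L p \in F0) && [forall q, (p < q) ==> (L q \notin F0)])%:R.
Proof.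
by rewrite /Tminus inE; congr (_ && _)%:R; apply: eq_forallb => q; rewrite inE.
Qed.

Section RowmotionAt.
Variables (s1 s2 : seq P) (p : P) (L : {ffun P -> Lab}).
Hypotheses (p_notin_s1 : p \notin s1) (p_notin_s2 : p \notin s2).
Hypotheses (below_notin_s2 : forall q, q < p -> q \notin s2)
           (above_notin_s1 : forall q, p < q -> q \notin s1).
Hypothesis L_J : L \in Jrs F0.

Let before := rowmotion F0 F1 theta s2 L.
Let after := rowmotion F0 F1 theta (s1 ++ p :: s2) L.

(* When p is toggled, the elements below p still carry their labels in L and
   those above p already carry their labels in [after]; so [advances] says that
   p is active at that moment. *)
Let advances :=
  [forall q, (q < p) ==> (L q \in F0)] &&
  [forall q, (p < q) ==> (after q \notin F0)].

Let after_split : after = rowmotion F0 F1 theta s1 (toggle F0 F1 theta p before).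
Proof. by rewrite /after /rowmotion foldr_cat. Qed.

Let before_below q : q <= p -> before q = L q.
Proof.
rewrite le_eqVlt => /predU1P[->|qp]; apply: rowmotion_notin => //.
exact: below_notin_s2.
Qed.

Let after_above q : p < q -> after q = before q.
Proof.
move=> pq; rewrite after_split rowmotion_notin ?above_notin_s1 //.
by rewrite toggle_other ?gt_eqF.
Qed.

Let after_at : after p = if advances then theta (L p) else L p.
Proof.
rewrite after_split rowmotion_notin // toggle_at before_below //.
rewrite activeE ?rowmotion_Jrs //.
congr (if _ && _ then _ else _); apply: eq_forallb => q.
  by case: (boolP (q < p)) => //= /ltW/before_below ->.
by case: (boolP (p < q)) => //= /after_above ->.
Qed.

Let below_in : L p \in F0 -> [forall q, (q < p) ==> (L q \in F0)].
Proof.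
by move=> Lp; apply/forallP => q; apply/implyP => /ltW; move/JrsP: L_J; apply.
Qed.

Let above_notin : L p \notin F0 -> [forall q, (p < q) ==> (after q \notin F0)].
Proof.
move=> Lp; apply/forallP => q; apply/implyP => pq.
by rewrite after_above //; exact: (rowmotion_above_notin L_J p_notin_s2 Lp pq).
Qed.

Lemma Tplus_sub_Tminus_rowmotion (c : rat) (g : Lab -> rat) :
  (forall l, g (theta l) - g l = (l \in F1)%:R - c * (theta l \in F0)%:R) ->
  Tplus (preim_set F0 L) p - c * Tminus (preim_set F0 after) p =
    g (after p) - g (L p).
Proof.
move=> g_cobound; rewrite TplusE TminusE after_at /advances.
have [Lp|Lp] := boolP (L p \in F0).
  rewrite below_in //=; case: ifP => _.
    by rewrite g_cobound mem_F1 Lp andbT.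
  by rewrite Lp andbF subrr mulr0 subr0.
rewrite above_notin // !andbT; case: ifP => _.
  by rewrite g_cobound mem_F1 Lp.
by rewrite (negPf Lp) subrr mulr0 subr0.
Qed.

End RowmotionAt.

End Toggles.

Theorem lemma5p4 (d : Order.disp_t) (P : finPOrderType d) (Lab : finType)
    (F0 F1 : {set Lab}) (r s : nat) (theta : {perm Lab}) (ext : seq P) (p : P) :
  (0 < r)%N -> (0 < s)%N ->
  [disjoint F0 & F1] -> F0 :|: F1 = [set: Lab] ->
  #|F0| = s -> #|F1| = r ->
  single_cycle theta ->
  linear_extension ext ->
  forall L : {ffun P -> Lab}, L \in Jrs F0 ->
    let O := fingraph.orbit (rowmotion F0 F1 theta ext) L in
    (\sum_(M <- O)
        (Tplus (preim_set F0 M) p - (r%:R / s%:R) * Tminus (preim_set F0 M) p))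
      / (size O)%:R = 0.
Proof.
move=> _ s_gt0 F01_disjoint F01_cover card_F0 card_F1 theta_cycle ext_linear.
move=> L L_J O.
set c : rat := r%:R / s%:R.
have [g g_cobound] : exists g : Lab -> rat,
    forall l, g (theta l) - g l = (l \in F1)%:R - c * (theta l \in F0)%:R.
  apply: single_cycle_coboundary => //.
  by rewrite card_F0 card_F1 /c divfK // pnatr_eq0 -lt0n.
have [s1 [s2 [ext_split p_s1 p_s2 below_s2 above_s1]]] :=
  linear_extension_split p ext_linear.
set rho := rowmotion F0 F1 theta ext.
have orbit_J : {subset O <= Jrs F0}.
  by move=> M /trajectP[i _ ->]; elim: i => //= i; apply: rowmotion_Jrs.
have rho_cycle : iter (fingraph.order rho L) rho L = L.
  apply: (iter_order_in (S := Jrs F0)) => //; first exact: rowmotion_Jrs.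
  exact: rowmotion_inj.
pose phi (M : {ffun P -> Lab}) := g (M p) + c * Tminus (preim_set F0 M) p.
rewrite (eq_big_seq (fun M => phi (rho M) - phi M)).
  by rewrite orbit_sum_telescope // mul0r.
move=> M /orbit_J M_J; have := Tplus_sub_Tminus_rowmotion F01_disjoint F01_cover
  p_s1 p_s2 below_s2 above_s1 M_J g_cobound.
rewrite -ext_split -/rho /phi => /eqP; rewrite subr_eq => /eqP ->.
by rewrite opprD addrACA addrA.
Qed.
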